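(* For $n \geq 3$, the collapsibility number of $\mathcal{VR}(\mathbb{I}_n;2)$ is $4$.
   Context: For $n\ge 1$, $\mathbb{I}_n$ is the $n$-dimensional hypercube graph: vertex set $\{0,1\}^n$, two vertices adjacent iff they differ in exactly one coordinate; it is a metric space with the shortest-path (Hamming) distance $d(v,w)=\#\{i: v(i)\ne w(i)\}$. For a metric space $(X,d)$ and $r\ge0$, $\mathcal{VR}(X;r)$ is the simplicial complex on vertex set $X$ whose simplices are the finite subsets of diameter at most $r$. For a finite simplicial complex $\Delta$: if $\gamma\in\Delta$ with $|\gamma|\le d$ is contained in a unique maximal simplex $\sigma$ of $\Delta$, the elementary $d$-collapse removes all simplices $\tau$ with $\gamma\subseteq\tau\subseteq\sigma$. $\Delta$ is $d$-collapsible if a sequence of elementary $d$-collapses reduces $\Delta$ to the void complex $\emptyset$. The collapsibility number of $\Delta$ is the minimal $d$ such that $\Delta$ is $d$-collapsible. *)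

From mathcomp Require Import all_boot.
Set Implicit Arguments. Unset Strict Implicit. Unset Printing Implicit Defensive.

Definition cube (n : nat) := {ffun 'I_n -> bool}.

Definition hamming n (v w : cube n) : nat := #|[set i | v i != w i]|.

(* Vietoris-Rips complex VR(I_n; r): all (finite) subsets of diameter <= r.
   A simplicial complex is represented by its set of faces, the empty face
   included (so the void complex is set0). *)
Definition VR n (r : nat) : {set {set cube n}} :=
  [set s : {set cube n} | [forall v in s, forall w in s, hamming v w <= r]].

Section Collapse.
Variable V : finType.
Implicit Types (K : {set {set V}}) (g s : {set V}).

Definition maxface K s : Prop :=
  s \in K /\ forall t, t \in K -> s \subset t -> t = s.

Definition collapse_step (d : nat) K K' : Prop :=
  exists g s, [/\ g \in K, #|g| <= d, maxface K s, g \subset s &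
    (forall s', maxface K s' -> g \subset s' -> s' = s)] /\
    K' = [set t in K | ~~ ((g \subset t) && (t \subset s))].

Inductive d_collapsible (d : nat) : {set {set V}} -> Prop :=
| dcoll_void : d_collapsible d set0
| dcoll_step K K' : collapse_step d K K' -> d_collapsible d K' -> d_collapsible d K.

Definition collapsibility_number_is K (c : nat) : Prop :=
  d_collapsible c K /\ forall d, d < c -> ~ d_collapsible d K.
End Collapse.

From mathcomp Require Import all_boot.
Set Implicit Arguments. Unset Strict Implicit. Unset Printing Implicit Defensive.

(** Upper bound: for a vertex v of S, the complex VR(S; 2) is VR(S \ v; 2) with
    a cone over VR(S ∩ N(v); 2) glued on, and such a union is (d+1)-collapsible
    as soon as the base of the cone is d-collapsible. Peeling vertices this way,
    VR(S; 2) is d-collapsible whenever S consists of common neighbours of a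
    clique of 4 - d vertices: for d = 0, two common neighbours y, z of a
    4-clique are themselves at distance at most 2 (the clique would otherwise
    occupy 4 of the 3 antipodal pairs of the 3-cube on which y and z disagree),
    so VR(S; 2) is a simplex.

    Lower bound: call a block a set of at least 4 pairwise close vertices of the
    3-subcube on the first three coordinates. An elementary collapse through a
    face g with |g| <= 3 cannot remove a block F ⊇ g: swapping a vertex x of
    F \ g for its antipode in the subcube yields another block containing g,
    whose unique maximal face would contain both x and its antipode, at
    distance 3. *)

Section Collapsibility.
Variable V : finType.
Implicit Types (K L D : {set {set V}}) (g s t : {set V}).

Lemma maxface_exists K t : t \in K -> exists2 s, maxface K s & t \subset s.
Proof.
move=> tK; have tt : (t \in K) && (t \subset t) by rewrite tK subxx.
case: (@arg_maxnP _ t (fun s => (s \in K) && (t \subset s)) (fun s => #|s|) tt).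
move=> s /andP[sK ts] smax.
exists s => //; split=> // u uK su; apply/eqP; rewrite eq_sym eqEcard su /=.
by apply: smax; rewrite uK (subset_trans ts su).
Qed.

Lemma collapsible_powerset d s : d_collapsible d (powerset s).
Proof.
apply: (@dcoll_step _ d _ set0); last exact: dcoll_void.
have smax : maxface (powerset s) s.
  split=> [|t]; first by rewrite powersetE.
  by rewrite powersetE => ts st; apply/eqP; rewrite eqEsubset ts st.
exists set0, s; split.
  split; rewrite ?powersetE ?sub0set ?cards0 //.
  move=> s' [s'K s'max] _; apply/esym/s'max; first exact: smax.1.
  by rewrite -powersetE.
by apply/setP => t; rewrite !inE sub0set andbN.
Qed.

Definition cone (v : V) L := [set t : {set V} | (v \in t) && (t :\ v \in L)].

Section Cone.
Variables (v : V) (D : {set {set V}}).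
Hypothesis vD : forall t, t \in D -> v \notin t.

Lemma mem_union_cone L t :
  (t \in D :|: cone v L) = if v \in t then t :\ v \in L else t \in D.
Proof.
rewrite !inE; case: ifP => vt //=; last by rewrite orbF.
by have /negbTE-> : t \notin D by apply: contraL vt; apply: vD.
Qed.

Lemma collapse_step_cone d L L' : (forall t, t \in L -> v \notin t) ->
  collapse_step d L L' -> collapse_step d.+1 (D :|: cone v L) (D :|: cone v L').
Proof.
move=> vL [g [s [[gL gd [sL smax] gs guniq] ->]]].
have [vg vs] : v \notin g /\ v \notin s by split; apply: vL.
have vsmax : maxface (D :|: cone v L) (v |: s).
  split=> [|t]; first by rewrite mem_union_cone setU11 setU1K.
  rewrite mem_union_cone => + st; rewrite (subsetP st _ (setU11 _ _)) => tvL.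
  have svt : s \subset t :\ v by rewrite subsetD1 vs andbT (subset_trans _ st) ?subsetUr.
  by rewrite -(smax _ tvL svt) setD1K // (subsetP st _ (setU11 _ _)).
exists (v |: g), (v |: s); split; first split.
- by rewrite mem_union_cone setU11 setU1K.
- by rewrite cardsU1 vg.
- exact: vsmax.
- by rewrite setUS.
- move=> s' [s'K s'max] gs'; have vs' : v \in s' by rewrite (subsetP gs') ?setU11.
  have s'vL : s' :\ v \in L by move: s'K; rewrite mem_union_cone vs'.
  have s'vmax : maxface L (s' :\ v).
    split=> // u uL su; have vu : v \notin u by apply: vL.
    suff <- : v |: u = s' by rewrite setU1K.
    apply: s'max; first by rewrite mem_union_cone setU11 setU1K.
    by rewrite -{1}(setD1K vs') setUS.
  have gs'v : g \subset s' :\ v.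
    by rewrite subsetD1 vg andbT (subset_trans _ gs') ?subsetUr.
  by rewrite -(guniq _ s'vmax gs'v) setD1K.
apply/setP => t; rewrite [RHS]inE !mem_union_cone; case: ifP => vt; last first.
  by rewrite subUset sub1set vt andbT.
by rewrite inE subUset sub1set vt subDset subsetD1 vg andbT.
Qed.

Lemma collapsible_union_cone d L : (forall t, t \in L -> v \notin t) ->
  d_collapsible d L -> d_collapsible d.+1 D -> d_collapsible d.+1 (D :|: cone v L).
Proof.
move=> + HL; elim: HL => [|L0 L1 step _ IH] vL HD.
  by have -> : D :|: cone v set0 = D by apply/setP => t; rewrite !inE andbF orbF.
have vL1 t : t \in L1 -> v \notin t.
  by case: step => [g [s [_ ->]]]; rewrite inE => /andP[/vL].
exact: dcoll_step (collapse_step_cone vL step) (IH vL1 HD).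
Qed.

End Cone.

Lemma not_collapsible_of_blocking d K (P : {set V} -> Prop) :
  (exists F, P F) -> (forall F, P F -> F \in K) ->
  (forall F g, P F -> g \subset F -> #|g| <= d -> exists2 F', P F' &
     g \subset F' /\ forall t, t \in K -> ~~ (F :|: F' \subset t)) ->
  ~ d_collapsible d K.
Proof.
move=> [F0 PF0] PK block HK.
suff: forall K0, d_collapsible d K0 -> K0 \subset K -> (forall F, P F -> F \in K0) -> False.
  by move/(_ K HK (subxx K) PK).
move=> K0; elim=> [|K1 K2 step _ IH] K1K PK1; first by have := PK1 _ PF0; rewrite inE.
case: step => g [s [[gK1 gd [sK1 _] gs guniq] K2E]].
apply: IH => [|F PF].
  by apply: subset_trans K1K; apply/subsetP => t; rewrite K2E inE => /andP[].
rewrite K2E inE PK1 //=; apply/negP => /andP[gF Fs].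
have [F' PF' [gF' noface]] := block F g PF gF gd.
have [s' s'max F's'] := maxface_exists (PK1 _ PF').
have s's : s' = s by apply: guniq s'max (subset_trans gF' F's').
by have := noface _ (subsetP K1K _ sK1); rewrite subUset Fs -s's F's'.
Qed.

End Collapsibility.

Section Hamming.
Variable n : nat.
Implicit Types (v w y z q : cube n) (C : seq 'I_n) (t : {set cube n}).

Lemma hamming_sum v w : hamming v w = \sum_i (v i != w i).
Proof. by rewrite /hamming -sum1_card big_mkcond; apply: eq_bigr => i _; rewrite inE. Qed.

Lemma hammingC v w : hamming v w = hamming w v.
Proof. by rewrite !hamming_sum; apply: eq_bigr => i _; rewrite eq_sym. Qed.

Lemma hammingvv v : hamming v v = 0.
Proof. by rewrite hamming_sum big1 // => i _; rewrite eqxx. Qed.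

Lemma hamming_eq0 v w : (hamming v w == 0) = (v == w).
Proof.
rewrite cards_eq0; apply/eqP/eqP => [vw | -> ]; last by apply/setP => i; rewrite !inE eqxx.
by apply/ffunP => i; apply/eqP/negbFE; move/setP/(_ i): vw; rewrite !inE.
Qed.

Lemma VRP r t : reflect {in t &, forall v w, hamming v w <= r} (t \in VR n r).
Proof.
rewrite inE; apply: (iffP forall_inP) => [H v w vt wt | H v vt].
  by move/forall_inP: (H v vt); apply.
by apply/forall_inP => w; apply: H.
Qed.

Lemma VR_subset r t (u : {set cube n}) : u \subset t -> t \in VR n r -> u \in VR n r.
Proof. by move=> /subsetP ut /VRP tV; apply/VRP => a b /ut ta /ut tb; apply: tV. Qed.

Lemma VR_setU1 r v t :
  (v |: t \in VR n r) = (t \in VR n r) && [forall w in t, hamming w v <= r].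
Proof.
apply/VRP/andP => [tV | [/VRP tV /forall_inP tv]].
  split; first by apply/VRP => a b ta tb; apply: tV; rewrite in_setU1 ?ta ?tb orbT.
  by apply/forall_inP => w wt; apply: tV; rewrite in_setU1 ?wt ?eqxx ?orbT.
move=> a b; rewrite !in_setU1 => /predU1P[-> | ta] /predU1P[-> | tb].
- by rewrite hammingvv.
- by rewrite hammingC tv.
- exact: tv.
- exact: tV.
Qed.

Definition hamming_on C v w := \sum_(i <- C) (v i != w i).

Lemma hamming_on_cons j C v w :
  hamming_on (j :: C) v w = (v j != w j) + hamming_on C v w.
Proof. exact: big_cons. Qed.

Lemma hamming_on_le C v w : uniq C -> hamming_on C v w <= hamming v w.
Proof.
by move=> uC; rewrite hamming_sum /hamming_on big_uniq // [X in _ <= X](bigID (mem C)) leq_addr.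
Qed.

Lemma eq_hamming_on C v w w' : {in C, w =1 w'} -> hamming_on C v w = hamming_on C v w'.
Proof. by move=> ww'; apply: eq_big_seq => i /ww' ->. Qed.

Lemma hamming_on_eq0 C v w : {in C, w =1 v} -> hamming_on C v w = 0.
Proof. by move=> wv; apply: big1_seq => i /andP[_ /wv ->]; rewrite eqxx. Qed.

Lemma hamming_on_compl C y z q : {in C, forall i, z i = ~~ y i} ->
  hamming_on C y q + hamming_on C z q = size C.
Proof.
move=> zy; rewrite /hamming_on -big_split -sum1_size /=.
by apply: eq_big_seq => i /zy ->; case: (y i); case: (q i).
Qed.

End Hamming.

Lemma xorb_pattern_eq (a1 a2 a3 b1 b2 b3 : bool) :
  (a1 (+) a2, a1 (+) a3) = (b1 (+) b2, b1 (+) b3) ->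
  [/\ b1 = a1, b2 = a2 & b3 = a3] \/ [/\ b1 = ~~ a1, b2 = ~~ a2 & b3 = ~~ a3].
Proof. by case: a1 a2 a3 b1 b2 b3 => [] [] [] [] [] [] //= _; solve [by left | by right]. Qed.

Section CommonNeighbours.
Variables (n : nat) (y z : cube n) (i1 i2 i3 : 'I_n).
Local Notation C := [:: i1; i2; i3].
Hypothesis uniqC : uniq C.
Hypothesis zy : {in C, forall i, z i = ~~ y i}.
Implicit Types (q r : cube n).

(* Complementing all three bits preserves the class, and the four classes are
   exactly the four antipodal pairs of the 3-cube on C. *)
Definition parity_class q := (q i1 (+) q i2, q i1 (+) q i3).

Lemma parity_class_eq q q' : parity_class q = parity_class q' ->
  {in C, q' =1 q} \/ {in C, forall i, q' i = ~~ q i}.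
Proof.
case/xorb_pattern_eq => -[e1 e2 e3]; [left | right] => i;
  by rewrite !inE => /or3P[] /eqP->.
Qed.

Lemma parity_class_neq q : hamming y q <= 2 -> hamming z q <= 2 ->
  parity_class q != parity_class y.
Proof.
move=> hyq hzq; apply/eqP => /esym/parity_class_eq qy; have := hamming_on_compl q zy.
case: qy => [qy | qny]; first rewrite (hamming_on_eq0 qy) add0n => hz.
  by have := hamming_on_le z q uniqC; rewrite hz => /leq_trans/(_ hzq).
have qz : {in C, q =1 z} by move=> i iC; rewrite qny ?zy.
rewrite (hamming_on_eq0 qz) addn0 /= => hy.
by have := hamming_on_le y q uniqC; rewrite hy => /leq_trans/(_ hyq).
Qed.

Lemma parity_class_inj q q' :
  hamming y q <= 2 -> hamming z q <= 2 -> hamming y q' <= 2 -> hamming z q' <= 2 ->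
  hamming q q' <= 2 -> parity_class q = parity_class q' -> q = q'.
Proof.
move=> hyq hzq hyq' hzq' hqq' /parity_class_eq[q'q | q'nq]; last first.
  have := hamming_on_compl q q'nq; rewrite hamming_on_eq0 // add0n => h3.
  by have := hamming_on_le q' q uniqC; rewrite h3 hammingC => /leq_trans/(_ hqq').
apply/ffunP => j; apply/eqP; apply: contraT => qj.
have jC : j \notin C by apply: contra qj => /q'q->.
have uniqjC : uniq (j :: C) by rewrite /= jC.
(* r j differs from q j or from q' j, leaving at most one unit for C *)
have close r : hamming r q <= 2 -> hamming r q' <= 2 -> hamming_on C r q <= 1.
  move=> hq hq'; have := hamming_on_le r q uniqjC; have := hamming_on_le r q' uniqjC.
  rewrite !(hamming_on_cons j) (eq_hamming_on r q'q).
  move=> /leq_trans/(_ hq') h' /leq_trans/(_ hq) h.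
  by move: qj h h'; case: (r j) (q j) (q' j) => [] [] [].
have := leq_add (close y hyq hyq') (close z hzq hzq').
by rewrite (hamming_on_compl q zy).
Qed.

End CommonNeighbours.

Lemma common_neighbours_close n (Q : {set cube n}) y z : 3 < #|Q| -> Q \in VR n 2 ->
  {in Q, forall q, hamming y q <= 2 /\ hamming z q <= 2} -> hamming y z <= 2.
Proof.
move=> Q4 /VRP HQ near; rewrite leqNgt; apply/negP.
case/card_gt2P => i1 [i2 [i3 [[]]]]; rewrite !inE => e1 e2 e3 [n12 n23 n31].
have uniqC : uniq [:: i1; i2; i3] by rewrite /= !inE !negb_or n12 n23 eq_sym n31.
have zy : {in [:: i1; i2; i3], forall i, z i = ~~ y i}.
  by move=> i; rewrite !inE => /or3P[] /eqP-> ; [move: e1 | move: e2 | move: e3];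
    case: (y _) (z _) => [] [].
suff : #|Q| <= 3 by rewrite leqNgt Q4.
rewrite -(card_in_imset (f := parity_class i1 i2 i3)); last first.
  move=> q q' qQ q'Q; have [hyq hzq] := near q qQ; have [hyq' hzq'] := near q' q'Q.
  exact: (parity_class_inj uniqC zy hyq hzq hyq' hzq' (HQ q q' qQ q'Q)).
have -> : 3 = #|[set~ parity_class i1 i2 i3 y]| by rewrite cardsC1 card_prod card_bool.
apply/subset_leq_card/subsetP => _ /imsetP[q qQ ->]; rewrite in_setC1.
by have [hyq hzq] := near q qQ; exact: (parity_class_neq uniqC zy hyq hzq).
Qed.

Section InducedComplex.
Variables (n r : nat).
Implicit Types (v w : cube n) (S t : {set cube n}).

Definition VR_in S := [set t in VR n r | t \subset S].
Definition nbhd v := [set w | (w != v) && (hamming w v <= r)].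

Lemma mem_VR_in S t : (t \in VR_in S) = (t \in VR n r) && (t \subset S).
Proof. by rewrite [LHS]inE. Qed.

Lemma VR_inT : VR_in setT = VR n r.
Proof. by apply/setP => t; rewrite mem_VR_in subsetT andbT. Qed.

Lemma VR_in_simplex S : S \in VR n r -> VR_in S = powerset S.
Proof.
move/VRP => HS; apply/setP => t; rewrite mem_VR_in powersetE andbC.
case tS: (t \subset S) => //=; apply/VRP => a b ta tb.
exact: HS (subsetP tS _ ta) (subsetP tS _ tb).
Qed.

Lemma notin_VR_in S v t : v \notin S -> t \in VR_in S -> v \notin t.
Proof. by move=> vS; rewrite mem_VR_in => /andP[_ /subsetP tS]; apply: contra vS => /tS. Qed.

Lemma VR_in_split S v : v \in S ->
  VR_in S = VR_in (S :\ v) :|: cone v (VR_in (S :&: nbhd v)).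
Proof.
move=> vS; apply/setP => t; rewrite in_setU [t \in cone _ _]inE !mem_VR_in subsetD1.
have [vt | vt] /= := boolP (v \in t); last by rewrite andbT orbF.
rewrite !andbF /= -{1 2}(setD1K vt); move: (t :\ v) (setD11 v t) => t' /negbT vt'.
rewrite VR_setU1 subUset sub1set vS subsetI /= -!andbA; congr (_ && _).
rewrite andbC; congr (_ && _).
apply/forall_inP/subsetP => [tv w wt | tv w /tv]; last by rewrite inE => /andP[].
by rewrite inE tv // andbT; apply: contraNneq vt' => <-.
Qed.

End InducedComplex.

Lemma VR_in_collapsible n d (Q S : {set cube n}) : #|Q| + d = 4 -> Q \in VR n 2 ->
  {in Q, forall q, S \subset nbhd 2 q} -> d_collapsible d (VR_in 2 S).
Proof.
elim: d Q S => [|d IHd] Q S.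
  rewrite addn0 => Q4 QV SQ; rewrite VR_in_simplex; first exact: collapsible_powerset.
  apply/VRP => a b aS bS; apply: (common_neighbours_close _ QV); first by rewrite Q4.
  by move=> q /SQ /subsetP SQq; move: (SQq a aS) (SQq b bS);
    rewrite !inE => /andP[_ ->] /andP[_ ->].
move=> Qd QV SQ; have [m] := ubnP #|S|; elim: m S SQ => // m IHm S SQ Sm.
have [-> | [v vS]] := set_0Vmem S.
  rewrite VR_in_simplex; first exact: collapsible_powerset.
  by apply/VRP => a b; rewrite inE.
have vQ q : q \in Q -> (v != q) && (hamming v q <= 2).
  by move=> qQ; move/subsetP: (SQ q qQ) => /(_ v vS); rewrite inE.
have vnQ : v \notin Q by apply/negP => /vQ; rewrite eqxx.
rewrite (VR_in_split _ vS); apply: collapsible_union_cone.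
- by move=> t; apply: notin_VR_in; rewrite !inE eqxx.
- by move=> t; apply: notin_VR_in; rewrite !inE eqxx andbF.
- apply: (IHd (v |: Q)); first by rewrite cardsU1 vnQ add1n addSnnS.
    rewrite VR_setU1 QV; apply/forall_inP => q /vQ /andP[_].
    by rewrite hammingC.
  move=> q; rewrite in_setU1 => /predU1P[-> | /SQ SQq]; first exact: subsetIr.
  exact: subset_trans (subsetIl _ _) SQq.
- apply: IHm; last by rewrite (cardsD1 v S) vS in Sm.
  by move=> q /SQ; apply: subset_trans; apply: subD1set.
Qed.

Section LowerBound.
Variable m : nat.
Local Notation N := m.+3.
Implicit Types (a b x : cube N) (F : {set cube N}).

Definition first3 : seq 'I_N :=
  [:: Ordinal (isT : 0 < N); Ordinal (isT : 1 < N); Ordinal (isT : 2 < N)].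

Lemma mem_first3 i : (i \in first3) = (i < 3).
Proof. by case: i => -[|[|[|k]]] ?. Qed.

Definition in_subcube a := forall i : 'I_N, 3 <= i -> a i = false.

Definition antipode x : cube N := [ffun i : 'I_N => if i < 3 then ~~ x i else x i].

Lemma hamming_subcube a b : in_subcube a -> in_subcube b ->
  hamming a b = hamming_on first3 a b.
Proof.
move=> a3 b3; rewrite /hamming_on big_uniq // hamming_sum (bigID (mem first3)) /=.
rewrite [X in _ + X]big1 ?addn0 // => i; rewrite mem_first3 -leqNgt => i3.
by rewrite a3 ?b3.
Qed.

Lemma antipode_subcube x : in_subcube x -> in_subcube (antipode x).
Proof. by move=> x3 i i3; rewrite ffunE ltnNge i3 x3. Qed.

Lemma antipode_first3 x : {in first3, forall i : 'I_N, antipode x i = ~~ x i}.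
Proof. by move=> i; rewrite mem_first3 ffunE => ->. Qed.

Lemma hamming_antipode x : in_subcube x -> hamming x (antipode x) = 3.
Proof.
move=> x3; rewrite hammingC hamming_subcube //; last exact: antipode_subcube.
by have := hamming_on_compl x (antipode_first3 x); rewrite hamming_on_eq0.
Qed.

Lemma hamming_antipode_le x a : in_subcube x -> in_subcube a -> a != x ->
  hamming (antipode x) a <= 2.
Proof.
move=> x3 a3 ax; have xa : 0 < hamming x a by rewrite lt0n hamming_eq0 eq_sym.
have := hamming_on_compl a (antipode_first3 x).
rewrite -!hamming_subcube //; last exact: antipode_subcube.
by move=> h; rewrite -(leq_add2l (hamming x a)) h addn2.
Qed.

Definition subcube_block F := [/\ 3 < #|F|, F \in VR N 2 & {in F, forall a, in_subcube a}].

Lemma subcube_block_exchange F x : subcube_block F -> x \in F ->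
  subcube_block (antipode x |: F :\ x).
Proof.
case=> F4 FV F3 xF; have x3 := F3 x xF.
have xxF : antipode x \notin F.
  by apply/negP => xxF; move/VRP/(_ x _ xF xxF): FV; rewrite hamming_antipode.
split.
- move: F4; rewrite (cardsD1 x F) xF add1n cardsU1 in_setD1 (negbTE xxF) andbF.
  by rewrite /= add1n.
- rewrite VR_setU1 (VR_subset (subD1set F x) FV); apply/forall_inP => a /setD1P[ax aF].
  by rewrite hammingC; apply: hamming_antipode_le => //; apply: F3.
- move=> a; rewrite in_setU1 => /predU1P[-> | /setD1P[_ aF]]; last exact: F3.
  exact: antipode_subcube.
Qed.

Definition unit_vector k : cube N := [ffun i => i == k].

Definition corner_block : {set cube N} :=
  [set a in [ffun => false] :: map unit_vector first3].

Lemma subcube_block_corner : subcube_block corner_block.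
Proof.
have corner3 : {in corner_block, forall a, in_subcube a}.
  by move=> a; rewrite !inE => /or4P[] /eqP-> i i3; rewrite ffunE //;
    apply: contraTF i3 => /eqP->.
split=> //.
- have uv_inj : injective unit_vector.
    by move=> k k' /ffunP/(_ k); rewrite !ffunE eqxx => /esym/eqP.
  rewrite cardsE (card_uniqP _) // cons_uniq map_inj_uniq // andbT.
  by apply/mapP => -[k _ /ffunP/(_ k)]; rewrite !ffunE eqxx.
- apply/VRP => a b aF bF; rewrite (hamming_subcube (corner3 a aF) (corner3 b bF)).
  by move: aF bF; rewrite !inE => /or4P[] /eqP-> /or4P[] /eqP->;
    rewrite /hamming_on !big_cons big_nil !ffunE.
Qed.

Lemma VR_not_collapsible_lt4 d : d < 4 -> ~ d_collapsible d (VR N 2).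
Proof.
move=> d4; apply: (not_collapsible_of_blocking (P := subcube_block)).
- by exists corner_block; exact: subcube_block_corner.
- by move=> F [].
move=> F g [F4 FV F3] gF gd.
have /set0Pn[x /setDP[xF xg]] : F :\: g != set0.
  apply: contraTneq F4 => /eqP; rewrite setD_eq0 => /subset_leq_card Fg.
  by rewrite -leqNgt (leq_trans Fg) // -ltnS (leq_ltn_trans gd d4).
exists (antipode x |: F :\ x); first exact: subcube_block_exchange.
split.
  apply/subsetP => a ag; rewrite in_setU1 in_setD1 (subsetP gF _ ag) andbT.
  by apply/orP; right; apply: contraNneq xg => <-.
move=> t tV; apply/negP => /subsetP Ft.
have xt : x \in t by apply: Ft; rewrite inE xF.
have xxt : antipode x \in t by apply: Ft; rewrite !inE eqxx orbT.
by move/VRP/(_ x _ xt xxt): tV; rewrite hamming_antipode //; apply: F3.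
Qed.

End LowerBound.

Theorem theorem1p5 (n : nat) : 3 <= n -> collapsibility_number_is (VR n 2) 4.
Proof.
case: n => [|[|[|m]]] // _; split; last exact: VR_not_collapsible_lt4.
rewrite -VR_inT; apply: (VR_in_collapsible (Q := set0)); first by rewrite cards0.
  by apply/VRP => a b; rewrite inE.
by move=> q; rewrite inE.
Qed.
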